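(* Let $G$ be a finite group and $H$ a proper subgroup with $[G:H]\geq 3$. Let $M$ be a simple rank $3$ $G$-invariant matroid whose ground $G$-set is $G/H$. Define a relation on $G/H - \{\bar{1}\}$ by $\bar{a} \sim \bar{b}$ if $\bar{a} = \bar{b}$ or $\{\bar{1},\bar{a},\bar{b}\}$ is dependent. Then: (1) $\sim$ is a nontrivial equivalence relation; (2) if $\bar{a} \sim \bar{b}$ and $\bar{a} \neq \bar{b}$, then $\overline{a^{-1}} \sim \overline{a^{-1}b}$; (3) for any $h \in H$ and $a,b \in G - H$, if $\bar{a} \sim \bar{b}$ then $\overline{ha} \sim \overline{hb}$; (4) the bases of $M$ are precisely the sets $\{\bar{a},\bar{b},\bar{c}\} \subseteq G/H$ with the three elements distinct and $\overline{a^{-1}b} \not\sim \overline{a^{-1}c}$.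
   Context: $G/H$ is the set of left cosets with $G$ acting by left multiplication; $\bar{a} = aH$. A matroid on a $G$-set is $G$-invariant if $gB$ is a basis for every basis $B$ and $g\in G$. A matroid is simple if every circuit has at least three elements. An equivalence relation is nontrivial if it has at least two classes. *)

From mathcomp Require Import all_boot all_fingroup.
Set Implicit Arguments. Unset Strict Implicit. Unset Printing Implicit Defensive.

Local Open Scope group_scope.

Section Matroids.
Variable T : finType.

Definition matroid_bases (E : {set T}) (B : {set {set T}}) : Prop :=
  [/\ B != set0,
      (forall X, X \in B -> X \subset E) &
      (forall X Y, X \in B -> Y \in B -> forall x, x \in X :\: Y ->
         exists2 y, y \in Y :\: X & (y |: (X :\ x)) \in B)].

Definition m_indep (B : {set {set T}}) (X : {set T}) : bool :=
  [exists Y in B, X \subset Y].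

Definition m_dep (E : {set T}) (B : {set {set T}}) (X : {set T}) : bool :=
  (X \subset E) && ~~ m_indep B X.

Definition m_circuit (E : {set T}) (B : {set {set T}}) (C : {set T}) : bool :=
  m_dep E B C && [forall D : {set T}, (D \proper C) ==> m_indep B D].

Definition m_simple (E : {set T}) (B : {set {set T}}) : Prop :=
  forall C, m_circuit E B C -> 3 <= #|C|.

Definition m_rank_is (B : {set {set T}}) (r : nat) : Prop :=
  forall X, X \in B -> #|X| = r.
End Matroids.

Section CosetMatroid.
Variable gT : finGroupType.

Definition cbar (H : {set gT}) (a : gT) : {set gT} := a *: H.

Definition cact (g : gT) (X : {set {set gT}}) : {set {set gT}} :=
  [set g *: C | C in X].

Definition G_invariant (G : {set gT}) (B : {set {set {set gT}}}) : Prop :=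
  forall g X, g \in G -> X \in B -> cact g X \in B.

Definition simrel (G H : {set gT}) (B : {set {set {set gT}}}) (C D : {set gT}) : Prop :=
  C = D \/ m_dep (lcosets H G) B [set cbar H 1; C; D].
End CosetMatroid.

From mathcomp Require Import all_boot all_fingroup.
Set Implicit Arguments. Unset Strict Implicit. Unset Printing Implicit Defensive.
Local Open Scope group_scope.

(* Translation by a^-1 maps a basis {aH, bH, cH} to {H, a^-1bH, a^-1cH}, so
   the bases are determined by those through the identity coset H, and these
   are exactly the triples {H, C1, C2} with C1 and C2 not ~-related; this is
   (4).  Translations by a^-1 and by elements of H preserve dependence and,
   respectively, send aH to H or fix H; this gives (2) and (3).  Transitivity
   of ~ is the rank-3 fact that two lines through a point meet only there:
   by simplicity {H, C2} is independent, and augmenting it from a basis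
   {H, C1, C3} would make {H, C1, C2} or {H, C2, C3} independent. *)

Lemma cards3 (T : finType) (a b c : T) :
  a != b -> a != c -> b != c -> #|[set a; b; c]| = 3.
Proof. by move=> ab ac bc; rewrite -setUA cardsU1 cards2 !inE negb_or ab ac bc. Qed.

Lemma cards3P (T : finType) (A : {set T}) :
  reflect (exists a b c, [/\ a != b, a != c, b != c & A = [set a; b; c]])
          (#|A| == 3).
Proof.
apply: (iffP idP) => [|[a] [b] [c] [ab ac bc ->]]; last by rewrite cards3.
have [[|a [|b [|c []]]] //=] := cards_eqP.
rewrite !inE !andbT negb_or => /andP[/andP[ab ac] bc] _.
by exists a, b, c; split=> //; apply/setP => x; rewrite !inE orbA.
Qed.

Section MatroidFacts.
Variables (T : finType) (E : {set T}) (B : {set {set T}}).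
Implicit Types X Y C D I : {set T}.

Lemma m_indepS X Y : X \subset Y -> m_indep B Y -> m_indep B X.
Proof.
move=> sXY /existsP[W /andP[WB sYW]].
by apply/existsP; exists W; rewrite WB (subset_trans sXY).
Qed.

Lemma basis_indep X : X \in B -> m_indep B X.
Proof. by move=> XB; apply/existsP; exists X; rewrite XB subxx. Qed.

Lemma m_dep_circuit X :
  m_dep E B X -> exists2 C : {set T}, C \subset X & m_circuit E B C.
Proof.
move=> depX; have [C minC sCX] := minset_exists depX.
have /andP[sCE _] := minsetp minC.
exists C => //; rewrite /m_circuit (minsetp minC); apply/forallP => D.
apply/implyP; rewrite properE => /andP[sDC nsCD].
have [//|nID] := boolP (m_indep B D).
have depD : m_dep E B D by rewrite /m_dep nID (subset_trans sDC sCE).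
by rewrite (minsetinf minC depD sDC) subxx in nsCD.
Qed.

Lemma simple_indep2 x y :
  m_simple E B -> x \in E -> y \in E -> m_indep B [set x; y].
Proof.
move=> simpleB xE yE; have [//|nI] := boolP (m_indep B [set x; y]).
have depXY : m_dep E B [set x; y] by rewrite /m_dep nI subUset !sub1set xE yE.
have [C sC circC] := m_dep_circuit depXY.
move: (leq_trans (simpleB C circC) (subset_leq_card sC)).
by rewrite cards2; case: (_ != _).
Qed.

Lemma indep_rank_basis r X : m_rank_is B r -> #|X| = r -> m_indep B X -> X \in B.
Proof.
move=> rankB cardX /existsP[Y /andP[YB sXY]].
suff /eqP-> : X == Y by [].
by rewrite eqEcard sXY cardX (rankB Y YB) leqnn.
Qed.

(* Extend [I] inside a basis [Y]; if no point of [Y :\: I] lies in [X], the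
   exchange axiom trades one of them for a point of [X]. *)
Lemma indep_augment r I X :
    matroid_bases E B -> m_rank_is B r -> m_indep B I -> #|I| < r -> X \in B ->
  exists2 x, x \in X :\: I & m_indep B (x |: I).
Proof.
move=> [_ _ exchB] rankB /existsP[Y /andP[YB sIY]] ltIr XB.
have /set0Pn[y /setDP[yY yI]] : Y :\: I != set0.
  rewrite setD_eq0; apply: contraL ltIr => /subset_leq_card.
  by rewrite -(rankB Y YB) leqNgt.
have [yX | yX] := boolP (y \in X).
  exists y; first by rewrite inE yI.
  by apply: m_indepS (basis_indep YB); rewrite subUset sub1set yY.
have [x /setDP[xX xY] YxB] : exists2 x, x \in X :\: Y & x |: (Y :\ y) \in B.
  by apply: exchB; rewrite ?inE ?yX.
exists x; first by rewrite inE xX andbT; apply: contra xY; apply: (subsetP sIY).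
apply: m_indepS (basis_indep YxB); apply: setUS.
by rewrite subsetD1 sIY.
Qed.

Lemma dep3_trans p x y z :
    matroid_bases E B -> m_simple E B -> m_rank_is B 3 ->
    p != x -> p != z -> x != z ->
    m_dep E B [set p; x; y] -> m_dep E B [set p; y; z] -> m_dep E B [set p; x; z].
Proof.
move=> mB simpleB rankB px pz xz /andP[sPXY nIXY] /andP[sPYZ nIYZ].
move: sPXY sPYZ; rewrite !subUset !sub1set => /andP[/andP[pE xE] yE] /andP[_ zE].
rewrite /m_dep !subUset !sub1set pE xE zE /=; apply/negP => IXZ.
have XZB : [set p; x; z] \in B by apply: indep_rank_basis rankB (cards3 px pz xz) IXZ.
have ltPY3 : #|[set p; y]| < 3 by rewrite cards2; case: (_ != _).
have [w] := indep_augment mB rankB (simple_indep2 simpleB pE yE) ltPY3 XZB.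
rewrite !inE negb_or => /andP[/andP[wp _]]; rewrite (negbTE wp) /= => /orP[] /eqP-> Iw.
- by move: nIXY; rewrite (m_indepS _ Iw) // !subUset !sub1set !inE !eqxx !orbT.
- by move: nIYZ; rewrite (m_indepS _ Iw) // !subUset !sub1set !inE !eqxx !orbT.
Qed.
End MatroidFacts.

Section CosetAction.
Variables (gT : finGroupType) (H : {group gT}).
Implicit Types (g a b h : gT) (X : {set {set gT}}).

Lemma cbarM g a : g *: cbar H a = cbar H (g * a).
Proof. by rewrite /cbar lcosetM. Qed.

Lemma cbarMl_inj g a b : cbar H (g * a) = cbar H (g * b) -> cbar H a = cbar H b.
Proof. by rewrite -!cbarM => /lcoset_inj. Qed.

Lemma cbar_id h : h \in H -> cbar H h = cbar H 1.
Proof. by move=> hH; rewrite /cbar lcoset1 lcoset_id. Qed.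

Lemma cbarV_neq1 a b : cbar H a <> cbar H b -> cbar H (a^-1 * b) != cbar H 1.
Proof.
by move=> neq_ab; apply/eqP; rewrite -(mulVg a) => /cbarMl_inj/esym.
Qed.

Lemma cbar_lcosets (G : {group gT}) a : a \in G -> cbar H a \in lcosets H G.
Proof. by move=> aG; apply/lcosetsP; exists a. Qed.

Lemma cact3 g (C1 C2 C3 : {set gT}) :
  cact g [set C1; C2; C3] = [set g *: C1; g *: C2; g *: C3].
Proof. by rewrite /cact !imsetU !imset_set1. Qed.

Lemma cactK g : cancel (cact g) (cact g^-1).
Proof.
move=> X; rewrite /cact -imset_comp (eq_imset _ (lcosetK g)).
by rewrite imset_id.
Qed.

Lemma cact_lcosets (G : {group gT}) g X :
  g \in G -> X \subset lcosets H G -> cact g X \subset lcosets H G.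
Proof.
move=> gG sXE; apply/subsetP => _ /imsetP[C CX ->].
have /lcosetsP[a aG ->] := subsetP sXE C CX.
by rewrite -lcosetM; apply: cbar_lcosets; rewrite groupM.
Qed.
End CosetAction.

Section CosetMatroid.
Variables (gT : finGroupType) (G H : {group gT}) (B : {set {set {set gT}}}).
Implicit Types (g a b c h : gT) (C : {set gT}) (X : {set {set gT}}).
Hypothesis invB : G_invariant G B.

Local Notation E := (lcosets H G).
Local Notation O := (cbar H 1).
Local Notation sim := (simrel G H B).

Lemma cact_indep g X : g \in G -> m_indep B (cact g X) = m_indep B X.
Proof.
have indep_cact g' X' : g' \in G -> m_indep B X' -> m_indep B (cact g' X').
  move=> g'G /existsP[Y /andP[YB sXY]].
  by apply/existsP; exists (cact g' Y); rewrite invB // imsetS.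
move=> gG; apply/idP/idP; last exact: indep_cact.
by move/(indep_cact _ _ (groupVr gG)); rewrite cactK.
Qed.

Lemma cact_dep g X : g \in G -> m_dep E B X -> m_dep E B (cact g X).
Proof.
by move=> gG /andP[sXE nIX]; rewrite /m_dep cact_lcosets // cact_indep.
Qed.

Lemma simrel_sym C1 C2 : sim C1 C2 -> sim C2 C1.
Proof.
case=> [-> | depC]; [by left | right].
by rewrite setUAC.
Qed.

Lemma simrel_mulH h a b : H \subset G -> h \in H ->
  sim (cbar H a) (cbar H b) -> sim (cbar H (h * a)) (cbar H (h * b)).
Proof.
move=> sHG hH [eq_ab | dep_ab]; first by left; rewrite -!cbarM eq_ab.
right; move: (cact_dep (subsetP sHG h hH) dep_ab).
by rewrite cact3 !cbarM mulg1 cbar_id.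
Qed.

Lemma simrel_inv a b : a \in G -> cbar H a <> cbar H b ->
  sim (cbar H a) (cbar H b) -> sim (cbar H a^-1) (cbar H (a^-1 * b)).
Proof.
move=> aG neq_ab [// | dep_ab]; right; move: (cact_dep (groupVr aG) dep_ab).
by rewrite cact3 !cbarM mulg1 mulVg (setUC [set _]).
Qed.

Lemma cact_basis a b c : a \in G ->
  ([set cbar H a; cbar H b; cbar H c] \in B) =
  ([set O; cbar H (a^-1 * b); cbar H (a^-1 * c)] \in B).
Proof.
move=> aG; apply/idP/idP => [XB | YB].
  by move: (invB (groupVr aG) XB); rewrite cact3 !cbarM mulVg.
by move: (invB aG YB); rewrite cact3 !cbarM mulg1 !mulKVg.
Qed.

Hypotheses (mB : matroid_bases E B) (rankB : m_rank_is B 3).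

Lemma basis_cosets3 X : X \in B ->
  exists a b c, [/\ [/\ a \in G, b \in G & c \in G],
    X = [set cbar H a; cbar H b; cbar H c]
  & [/\ cbar H a <> cbar H b, cbar H a <> cbar H c & cbar H b <> cbar H c]].
Proof.
case: mB => _ sBE _ XB.
have /cards3P[C1 [C2 [C3 [C12 C13 C23 defX]]]] : #|X| == 3 by rewrite rankB.
have /subsetP sXE := sBE X XB.
have [/lcosetsP[a aG eqC1] /lcosetsP[b bG eqC2] /lcosetsP[c cG eqC3]] :
    [/\ C1 \in E, C2 \in E & C3 \in E].
  by split; apply: sXE; rewrite defX !inE eqxx ?orbT.
subst C1 C2 C3; exists a, b, c; split=> //; split; exact/eqP.
Qed.

Lemma basis_through1P C1 C2 : C1 \in E -> C2 \in E -> C1 != O -> C2 != O ->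
  [set O; C1; C2] \in B <-> ~ sim C1 C2.
Proof.
move=> C1E C2E C1O C2O; split => [XB | nsim].
  case=> [eq12 | /andP[_ /negP]]; last by apply; apply: basis_indep.
  move: (rankB XB); rewrite eq12 -setUA setUid cards2.
  by case: (_ != _).
have C12 : C1 != C2 by apply/eqP => eq12; apply: nsim; left.
apply: indep_rank_basis rankB (cards3 _ _ C12) _; rewrite 1?eq_sym //.
have [//|nI] := boolP (m_indep B [set O; C1; C2]).
by case: nsim; right; rewrite /m_dep nI !subUset !sub1set C1E C2E cbar_lcosets.
Qed.

Lemma coset_basisP X : X \in B <->
  exists a b c, [/\ [/\ a \in G, b \in G & c \in G],
    X = [set cbar H a; cbar H b; cbar H c],
    [/\ cbar H a <> cbar H b, cbar H a <> cbar H c & cbar H b <> cbar H c]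
  & ~ sim (cbar H (a^-1 * b)) (cbar H (a^-1 * c))].
Proof.
have through1P a b c : [/\ a \in G, b \in G & c \in G] ->
    cbar H a <> cbar H b -> cbar H a <> cbar H c ->
    [set O; cbar H (a^-1 * b); cbar H (a^-1 * c)] \in B <->
    ~ sim (cbar H (a^-1 * b)) (cbar H (a^-1 * c)).
  move=> [aG bG cG] ab ac.
  by apply: basis_through1P; rewrite ?cbarV_neq1 // cbar_lcosets // groupM ?groupV.
split=> [XB | [a [b [c [abcG -> [ab ac _] nsim]]]]].
  have [a [b [c [abcG defX [ab ac bc]]]]] := basis_cosets3 XB.
  exists a, b, c; split=> //; apply/(through1P _ _ _ abcG ab ac).
  by case: abcG => aG _ _; rewrite -cact_basis // -defX.
case: (abcG) => aG _ _.
by rewrite cact_basis //; apply/(through1P _ _ _ abcG ab ac).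
Qed.

Lemma simrel_nontrivial :
  exists C1 C2, [/\ C1 \in E :\ O, C2 \in E :\ O & ~ sim C1 C2].
Proof.
case: (mB) => /set0Pn[X /coset_basisP[a [b [c [[aG bG cG] _ [ab ac _] nsim]]]]] _ _.
exists (cbar H (a^-1 * b)), (cbar H (a^-1 * c)).
by rewrite !inE !cbarV_neq1 // !cbar_lcosets // groupM ?groupV.
Qed.

Hypothesis simpleB : m_simple E B.

Lemma simrel_trans C1 C2 C3 : C1 != O -> C3 != O ->
  sim C1 C2 -> sim C2 C3 -> sim C1 C3.
Proof.
move=> C1O C3O [-> // | dep12] [<- | dep23]; first by right.
have [-> | C13] := eqVneq C1 C3; [by left | right].
by apply: dep3_trans mB simpleB rankB _ _ C13 dep12 dep23; rewrite eq_sym.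
Qed.
End CosetMatroid.

Theorem lemma3p6 (gT : finGroupType) (G H : {group gT}) (B : {set {set {set gT}}}) :
  H \proper G -> 3 <= #|G : H| ->
  matroid_bases (lcosets H G) B -> m_simple (lcosets H G) B -> m_rank_is B 3 ->
  G_invariant G B ->
  let D := lcosets H G :\ cbar H 1 in
  let sim := simrel G H B in
  (* (1) nontrivial equivalence relation on D *)
  ((forall C, C \in D -> sim C C) /\
   (forall C1 C2, C1 \in D -> C2 \in D -> sim C1 C2 -> sim C2 C1) /\
   (forall C1 C2 C3, C1 \in D -> C2 \in D -> C3 \in D ->
      sim C1 C2 -> sim C2 C3 -> sim C1 C3) /\
   (exists C1 C2, [/\ C1 \in D, C2 \in D & ~ sim C1 C2])) /\
  (* (2) *)
  (forall a b, a \in G :\: H -> b \in G :\: H ->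
     sim (cbar H a) (cbar H b) -> cbar H a <> cbar H b ->
     sim (cbar H a^-1) (cbar H (a^-1 * b))) /\
  (* (3) *)
  (forall h a b, h \in H -> a \in G :\: H -> b \in G :\: H ->
     sim (cbar H a) (cbar H b) -> sim (cbar H (h * a)) (cbar H (h * b))) /\
  (* (4) *)
  (forall X : {set {set gT}},
     X \in B <->
     exists a b c, [/\ [/\ a \in G, b \in G & c \in G],
        X = [set cbar H a; cbar H b; cbar H c],
        [/\ cbar H a <> cbar H b, cbar H a <> cbar H c & cbar H b <> cbar H c]
      & ~ sim (cbar H (a^-1 * b)) (cbar H (a^-1 * c))]).
Proof.
(* The index bound is implied by the existence of a basis of rank 3. *)
move=> /proper_sub sHG _ mB simpleB rankB invB D sim.
split; [split; [|split; [|split]] | split; [|split]].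
- by move=> C _; left.
- by move=> C1 C2 _ _; apply: simrel_sym.
- move=> C1 C2 C3 /setD1P[C1O _] _ /setD1P[C3O _].
  exact: simrel_trans.
- exact: simrel_nontrivial.
- by move=> a b /setDP[aG _] _ sim_ab neq_ab; apply: simrel_inv.
- by move=> h a b hH _ _; apply: simrel_mulH.
- exact: coset_basisP.
Qed.
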